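(* Let $\alpha\ge1$ and $2\le m\le k<n$. Suppose a single-pass streaming algorithm $\mathcal{A}$ with memory $m$ satisfies condition (SR). Then for every $i\in[k]$ and all sufficiently large $T$, $$\mathbb{E}_{\nu_i}[L_1]\le\frac18 f(k,m)\,T^{\frac{1}{\alpha+1}}.$$
   Context: Streaming stochastic multi-armed bandit: $n$ arms arrive one by one in a stream; arm $i$ has Bernoulli rewards with mean $\mu_i$. At most $m$ arms can be stored in memory; in each of $T$ rounds the player may discard stored arms and read next arms from the stream, then pulls exactly one stored arm $A_t$; discarded or passed-over arms cannot be pulled again. Regret $\mathbb{E}_\nu[R(T)]=\mathbb{E}_\nu[\sum_{t=1}^T(\mu_*-\mu_{A_t})]$ with $\mu_*$ the largest mean of $\nu$. Hard instances: $\varepsilon=\frac14\left(\frac{k}{T}\right)^{\frac{1}{2+2\alpha}}$, arms arriving in order $1,\dots,n$. $\nu_1$: arm 1 mean $\frac12+n\varepsilon$, arms $2,\dots,k$ mean $\frac12+(n-1)\varepsilon$, arms $k+1,\dots,n$ mean $\frac12$. For $2\le i\le k$, $\nu_i$ equals $\nu_1$ except arm $i$ has mean $\frac12+(n+1)\varepsilon$. $\mathcal{I}=\{\nu_1,\dots,\nu_k\}$. $\nu_i'$ equals $\nu_i$ except arms $k+1,\dots,n$ have mean $1$; $\mathcal{I}'=\{\nu_1',\dots,\nu_k'\}$. $f(k,m)=\frac{2}{16^{\alpha+1}}\cdot\frac{k-m+1}{k^{\frac{1}{\alpha+1}}}$. Condition (SR): for every $\nu\in\mathcal{I}$, $\mathbb{E}_\nu[R(T)]\le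 f(k,m)T^{\frac{1}{\alpha+1}}\varepsilon^{1-2\alpha}$, and for every $\nu'\in\mathcal{I}'$, $\mathbb{E}_{\nu'}[R(T)]\le\frac1{32}f(k,m)T^{\frac{1}{\alpha+1}}$. $L_1$ is the (random) number of rounds before the $(k+1)$-th arm of the stream is read (''stage one''). *)

From Stdlib Require Import Reals List Arith Lia Lra.
Import ListNotations.
Open Scope R_scope.

(** Arms are numbered 1..n in stream order.  A round's action is
    (p', M', a): after the round's reading/discarding the stream pointer is
    p' (arms 1..p' have been read or passed over), the memory is the list of
    arm indices M', and the arm pulled is a. *)
Definition action : Type := (nat * list nat * nat)%type.
Definition ptr (a : action) : nat := fst (fst a).
Definition mem (a : action) : list nat := snd (fst a).
Definition arm (a : action) : nat := snd a.

(** A history: the actions taken so far together with the observed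
    (Bernoulli) rewards, oldest first. *)
Definition history : Type := list (action * bool).

Definition state (h : history) : nat * list nat :=
  fold_left (fun _ e => (ptr (fst e), mem (fst e))) h (0%nat, []).

(** Legal action from state (p, M) with n arms and memory m: the pointer
    only moves forward (single pass), the new memory consists of previously
    stored arms and newly read arms, has at most m distinct arms, and the
    pulled arm is stored. *)
Definition valid_action (n m : nat) (s : nat * list nat) (a : action) : Prop :=
  let (p, M) := s in
  (p <= ptr a <= n)%nat /\ NoDup (mem a) /\ (length (mem a) <= m)%nat /\
  (forall x, In x (mem a) -> In x M \/ (p < x <= ptr a)%nat) /\
  In (arm a) (mem a).

Definition valid_hist (n m : nat) (h : history) : Prop :=
  forall h1 e h2, h = h1 ++ e :: h2 -> valid_action n m (state h1) (fst e).

(** A (possibly randomized) algorithm: maps a history to a finite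
    probability distribution over legal actions. *)
Definition policy : Type := history -> list (R * action).

Definition is_policy (n m : nat) (pol : policy) : Prop :=
  forall h, valid_hist n m h ->
    Forall (fun wa => 0 <= fst wa /\ valid_action n m (state h) (snd wa)) (pol h) /\
    fold_right Rplus 0 (map fst (pol h)) = 1.

Fixpoint expect (pol : policy) (mu : nat -> R) (t : nat) (h : history)
    (g : history -> R) : R :=
  match t with
  | O => g h
  | S t' =>
      fold_right Rplus 0
        (map (fun wa =>
           fst wa *
           (mu (arm (snd wa)) * expect pol mu t' (h ++ [(snd wa, true)]) g +
            (1 - mu (arm (snd wa))) * expect pol mu t' (h ++ [(snd wa, false)]) g))
         (pol h))
  end.

Definition mustar (n : nat) (mu : nat -> R) : R :=
  fold_right Rmax (mu 1%nat) (map mu (seq 1 n)).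

Definition regret (n : nat) (mu : nat -> R) (h : history) : R :=
  fold_right Rplus 0 (map (fun e => mustar n mu - mu (arm (fst e))) h).

Definition exp_regret (pol : policy) (n : nat) (mu : nat -> R) (T : nat) : R :=
  expect pol mu T [] (regret n mu).

(** L_1: number of rounds before the (k+1)-th arm is read, i.e. rounds
    whose pointer (after that round's reading) is still <= k. *)
Definition L1 (k : nat) (h : history) : R :=
  INR (length (filter (fun e => Nat.leb (ptr (fst e)) k) h)).

Definition eps (alpha : R) (k T : nat) : R :=
  / 4 * Rpower (INR k / INR T) (1 / (2 + 2 * alpha)).

Definition nu (k n : nat) (e : R) (i j : nat) : R :=
  if Nat.eqb j 1 then / 2 + INR n * e
  else if Nat.leb j k then
    (if Nat.eqb j i then / 2 + (INR n + 1) * e else / 2 + (INR n - 1) * e)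
  else / 2.

Definition nu' (k n : nat) (e : R) (i j : nat) : R :=
  if Nat.ltb k j then 1 else nu k n e i j.

Definition fkm (alpha : R) (k m : nat) : R :=
  2 / Rpower 16 (alpha + 1) * (INR k - INR m + 1) / Rpower (INR k) (1 / (alpha + 1)).

Definition SR (alpha : R) (m k n T : nat) (pol : policy) : Prop :=
  (forall i, (1 <= i <= k)%nat ->
     exp_regret pol n (nu k n (eps alpha k T) i) T <=
       fkm alpha k m * Rpower (INR T) (1 / (alpha + 1)) *
       Rpower (eps alpha k T) (1 - 2 * alpha)) /\
  (forall i, (1 <= i <= k)%nat ->
     exp_regret pol n (nu' k n (eps alpha k T) i) T <=
       / 32 * fkm alpha k m * Rpower (INR T) (1 / (alpha + 1))).

(* While the stream pointer is at most k only arms 1..k can have been pulled,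
   so L1 is determined by the rewards of arms 1..k, on which nu_i and nu'_i
   agree: E_{nu_i}[L1] = E_{nu'_i}[L1].  Under nu'_i the best mean is 1 while
   arms 1..k have mean at most 3/4 once (n+1) eps <= 1/4 (i.e. T is large),
   so every round of stage one costs regret at least 1/4 and
   E_{nu'_i}[L1] <= 4 E_{nu'_i}[R(T)] <= f(k,m) T^(1/(alpha+1)) / 8 by (SR). *)
From Stdlib Require Import Reals List Arith Lia Lra.
Import ListNotations.
Open Scope R_scope.

Lemma fold_right_Rplus_init (a : R) (l : list R) :
  fold_right Rplus a l = a + fold_right Rplus 0 l.
Proof. induction l as [|x l IH]; simpl; [ring | rewrite IH; ring]. Qed.

Lemma sum_map_le {A} (P : A -> Prop) (f g : A -> R) (l : list A) :
  Forall P l -> (forall x, P x -> f x <= g x) ->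
  fold_right Rplus 0 (map f l) <= fold_right Rplus 0 (map g l).
Proof.
  induction 1 as [|x l Px _ IH]; intros Hfg; simpl; [lra|].
  apply Rplus_le_compat; auto.
Qed.

Lemma sum_map_mull {A} (c : R) (f : A -> R) (l : list A) :
  fold_right Rplus 0 (map (fun x => c * f x) l) = c * fold_right Rplus 0 (map f l).
Proof. induction l as [|x l IH]; simpl; [ring | rewrite IH; ring]. Qed.

Lemma sum_map_mulr {A} (c : R) (f : A -> R) (l : list A) :
  fold_right Rplus 0 (map (fun x => f x * c) l) = fold_right Rplus 0 (map f l) * c.
Proof. induction l as [|x l IH]; simpl; [ring | rewrite IH; ring]. Qed.

Lemma state_snoc (h : history) (e : action * bool) :
  state (h ++ [e]) = (ptr (fst e), mem (fst e)).
Proof. unfold state; rewrite fold_left_app; reflexivity. Qed.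

Lemma L1_snoc (k : nat) (h : history) (e : action * bool) :
  L1 k (h ++ [e]) = L1 k h + (if Nat.leb (ptr (fst e)) k then 1 else 0).
Proof.
  unfold L1. rewrite filter_app, length_app, plus_INR.
  simpl. destruct (Nat.leb (ptr (fst e)) k); simpl; ring.
Qed.

Lemma regret_snoc (n : nat) (mu : nat -> R) (h : history) (e : action * bool) :
  regret n mu (h ++ [e]) = regret n mu h + (mustar n mu - mu (arm (fst e))).
Proof.
  unfold regret. rewrite map_app, fold_right_app. simpl.
  rewrite fold_right_Rplus_init. ring.
Qed.

Lemma mustar_ge (n : nat) (mu : nat -> R) (j : nat) :
  (1 <= j <= n)%nat -> mu j <= mustar n mu.
Proof.
  intros Hj. unfold mustar.
  assert (Hin : In (mu j) (map mu (seq 1 n))) by (apply in_map, in_seq; lia).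
  induction (map mu (seq 1 n)) as [|x l IH]; simpl in *; [tauto|].
  destruct Hin as [<-|Hin]; [apply Rmax_l|].
  eapply Rle_trans; [apply IH, Hin | apply Rmax_r].
Qed.

Section ValidHistories.

Variables n m : nat.

Lemma valid_hist_nil : valid_hist n m [].
Proof. intros h1 e h2 Heq. destruct h1; discriminate. Qed.

Lemma valid_hist_snoc (h : history) (a : action) (b : bool) :
  valid_hist n m h -> valid_action n m (state h) a -> valid_hist n m (h ++ [(a, b)]).
Proof.
  intros Hv Ha h1 e h2 Heq.
  destruct h2 as [|x h2] using rev_ind.
  - apply app_inj_tail in Heq as [-> <-]. exact Ha.
  - rewrite app_comm_cons, app_assoc in Heq.
    apply app_inj_tail in Heq as [Heq _].
    exact (Hv _ _ _ Heq).
Qed.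

Lemma valid_hist_snoc_inv (h : history) (e : action * bool) :
  valid_hist n m (h ++ [e]) -> valid_hist n m h /\ valid_action n m (state h) (fst e).
Proof.
  intros Hv. split.
  - intros h1 e' h2 Heq. apply (Hv h1 e' (h2 ++ [e])).
    rewrite Heq, <- app_assoc. reflexivity.
  - exact (Hv h e [] eq_refl).
Qed.

Lemma valid_action_inv (s : nat * list nat) (a : action) :
  valid_action n m s a ->
  (fst s <= ptr a)%nat /\
  (forall x, In x (mem a) -> In x (snd s) \/ (fst s < x <= ptr a)%nat) /\
  In (arm a) (mem a).
Proof. destruct s as [p M]; unfold valid_action; simpl; tauto. Qed.

Lemma valid_hist_mem_le_ptr (h : history) :
  valid_hist n m h -> forall x, In x (snd (state h)) -> (x <= fst (state h))%nat.
Proof.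
  induction h as [|e h IH] using rev_ind; [simpl; tauto|].
  intros Hv x Hx.
  destruct (valid_hist_snoc_inv _ _ Hv) as [Hv' Ha].
  rewrite state_snoc in *. simpl in *.
  destruct (valid_action_inv _ _ Ha) as [Hp [Hmem _]].
  destruct (Hmem x Hx) as [Hin|Hr]; [|lia].
  specialize (IH Hv' x Hin). lia.
Qed.

Lemma valid_action_arm_le_ptr (h : history) (a : action) :
  valid_hist n m h -> valid_action n m (state h) a -> (arm a <= ptr a)%nat.
Proof.
  intros Hv Ha. destruct (valid_action_inv _ _ Ha) as [Hp [Hmem Harm]].
  destruct (Hmem _ Harm) as [Hin|Hr]; [|lia].
  pose proof (valid_hist_mem_le_ptr _ Hv _ Hin). lia.
Qed.

Lemma regret_ge_L1 (k : nat) (mu : nat -> R) (gap : R) :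
  (forall j, mu j <= mustar n mu) ->
  (forall j, (j <= k)%nat -> mu j + gap <= mustar n mu) ->
  forall h, valid_hist n m h -> gap * L1 k h <= regret n mu h.
Proof.
  intros Hmax Hgap h. induction h as [|e h IH] using rev_ind.
  - intros _. unfold L1, regret; simpl. lra.
  - intros Hv. destruct (valid_hist_snoc_inv _ _ Hv) as [Hv' Ha].
    rewrite L1_snoc, regret_snoc. specialize (IH Hv').
    pose proof (valid_action_arm_le_ptr _ _ Hv' Ha).
    pose proof (Hmax (arm (fst e))).
    destruct (Nat.leb (ptr (fst e)) k) eqn:E.
    + apply Nat.leb_le in E. assert (Hg := Hgap (arm (fst e)) ltac:(lia)). lra.
    + lra.
Qed.

End ValidHistories.

Section Expectation.

Variables (n m : nat) (pol : policy).
Hypothesis Hpol : is_policy n m pol.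

Lemma expect_scale (mu : nat -> R) (t : nat) :
  forall h c g, expect pol mu t h (fun x => c * g x) = c * expect pol mu t h g.
Proof.
  induction t as [|t IH]; intros h c g; simpl; auto.
  rewrite <- sum_map_mull. f_equal. apply map_ext. intros wa.
  rewrite !IH. ring.
Qed.

Lemma expect_le (mu : nat -> R) : (forall j, 0 <= mu j <= 1) ->
  forall t h g1 g2, valid_hist n m h ->
  (forall h', valid_hist n m h' -> g1 h' <= g2 h') ->
  expect pol mu t h g1 <= expect pol mu t h g2.
Proof.
  intros Hmu t. induction t as [|t IH]; intros h g1 g2 Hv Hg; simpl; auto.
  destruct (Hpol h Hv) as [Hf _].
  apply (sum_map_le _ _ _ _ Hf). intros wa [Hw Ha].
  apply Rmult_le_compat_l; auto.
  pose proof (Hmu (arm (snd wa))).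
  apply Rplus_le_compat; apply Rmult_le_compat_l; try lra;
    apply IH; auto; apply valid_hist_snoc; auto.
Qed.

Lemma expect_L1_stage_two (k : nat) (mu : nat -> R) :
  forall t h, valid_hist n m h -> (k < fst (state h))%nat ->
  expect pol mu t h (L1 k) = L1 k h.
Proof.
  intros t. induction t as [|t IH]; intros h Hv Hk; simpl; auto.
  destruct (Hpol h Hv) as [Hf Hsum]. rewrite Forall_forall in Hf.
  transitivity (fold_right Rplus 0 (map (fun wa => fst wa * L1 k h) (pol h))).
  - f_equal. apply map_ext_in. intros wa Hin.
    destruct (Hf wa Hin) as [_ Ha].
    destruct (valid_action_inv _ _ _ _ Ha) as [Hp _].
    assert (Hstay : forall b, expect pol mu t (h ++ [(snd wa, b)]) (L1 k) = L1 k h).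
    { intros b. rewrite IH.
      - rewrite L1_snoc. simpl.
        replace (Nat.leb (ptr (snd wa)) k) with false by (symmetry; apply Nat.leb_gt; lia).
        ring.
      - apply valid_hist_snoc; auto.
      - rewrite state_snoc. simpl. lia. }
    rewrite !Hstay. ring.
  - rewrite sum_map_mulr, Hsum. ring.
Qed.

Lemma expect_L1_ext (k : nat) (mu1 mu2 : nat -> R) :
  (forall j, (j <= k)%nat -> mu1 j = mu2 j) ->
  forall t h, valid_hist n m h ->
  expect pol mu1 t h (L1 k) = expect pol mu2 t h (L1 k).
Proof.
  intros Hmu t. induction t as [|t IH]; intros h Hv; simpl; auto.
  destruct (Hpol h Hv) as [Hf _]. rewrite Forall_forall in Hf.
  f_equal. apply map_ext_in. intros wa Hin.
  destruct (Hf wa Hin) as [_ Ha].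
  pose proof (valid_action_arm_le_ptr _ _ _ _ Hv Ha).
  destruct (le_lt_dec (arm (snd wa)) k) as [Hle|Hlt].
  - rewrite Hmu, !IH by (auto; apply valid_hist_snoc; auto). reflexivity.
  - assert (Hpast : forall b, (k < fst (state (h ++ [(snd wa, b)])))%nat)
      by (intros b; rewrite state_snoc; simpl; lia).
    rewrite !expect_L1_stage_two, !L1_snoc by (auto; apply valid_hist_snoc; auto).
    simpl. ring.
Qed.

Lemma expect_L1_le_regret (k : nat) (mu : nat -> R) (gap : R) (T : nat) :
  (forall j, 0 <= mu j <= 1) -> (forall j, mu j <= mustar n mu) ->
  (forall j, (j <= k)%nat -> mu j + gap <= mustar n mu) ->
  gap * expect pol mu T [] (L1 k) <= exp_regret pol n mu T.
Proof.
  intros Hmu Hmax Hgap. rewrite <- expect_scale.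
  apply expect_le; auto using valid_hist_nil.
  intros h Hv. apply (regret_ge_L1 n m); auto.
Qed.

End Expectation.

Lemma eps_pos (alpha : R) (k T : nat) : 0 < eps alpha k T.
Proof. unfold eps, Rpower. pose proof (exp_pos ((1 / (2 + 2 * alpha)) * ln (INR k / INR T))). lra. Qed.

Lemma eps_eventually_le (alpha c : R) (k : nat) :
  0 < 2 + 2 * alpha -> 0 < c -> (0 < k)%nat ->
  exists T0 : nat, forall T : nat, (T0 <= T)%nat -> eps alpha k T <= c.
Proof.
  intros Ha Hc Hk.
  set (p := 2 + 2 * alpha) in *.
  set (d := Rpower (4 * c) p).
  assert (Hd : 0 < d) by (unfold d, Rpower; apply exp_pos).
  assert (HkR : 0 < INR k) by (apply lt_0_INR; lia).
  destruct (INR_unbounded (INR k / d)) as [N HN].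
  exists (Nat.max N 1). intros T HT.
  assert (HTN : INR N <= INR T) by (apply le_INR; lia).
  assert (HT1 : 1 <= INR T) by (apply (le_INR 1); lia).
  assert (Hratio : 0 < INR k / INR T <= d).
  { split; [apply Rdiv_lt_0_compat; lra|].
    apply (Rmult_le_reg_r (INR T)); [lra|].
    replace (INR k / INR T * INR T) with (INR k) by (field; lra).
    assert (INR k / d * d = INR k) by (field; lra).
    nra. }
  assert (Hroot : Rpower d (1 / p) = 4 * c).
  { unfold d. rewrite Rpower_mult.
    replace (p * (1 / p)) with 1 by (field; lra). apply Rpower_1; lra. }
  unfold eps. fold p.
  assert (Rpower (INR k / INR T) (1 / p) <= 4 * c).
  { rewrite <- Hroot. apply Rle_Rpower_l; [|exact Hratio].
    unfold Rdiv. rewrite Rmult_1_l. left. apply Rinv_0_lt_compat. lra. }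
  lra.
Qed.

Section HardInstances.

Variables (k n i : nat) (e : R).

Lemma nu'_stage_one (j : nat) : (j <= k)%nat -> nu' k n e i j = nu k n e i j.
Proof.
  intros Hj. unfold nu'.
  replace (Nat.ltb k j) with false by (symmetry; apply Nat.ltb_ge; lia).
  reflexivity.
Qed.

Lemma one_le_mustar_nu' : (k < n)%nat -> 1 <= mustar n (nu' k n e i).
Proof.
  intros Hkn. replace 1 with (nu' k n e i n) at 1.
  - apply mustar_ge. lia.
  - unfold nu'. replace (Nat.ltb k n) with true by (symmetry; apply Nat.ltb_lt; lia).
    reflexivity.
Qed.

Hypothesis He : 0 <= e.
Hypothesis Hsmall : (INR n + 1) * e <= / 4.
Hypothesis Hkn : (k < n)%nat.

Lemma nu_stage_one_bounds (j : nat) : (j <= k)%nat -> / 2 <= nu k n e i j <= 3 / 4.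
Proof.
  intros Hj. assert (Hn : 1 <= INR n) by (apply (le_INR 1); lia). unfold nu.
  destruct (Nat.eqb j 1); [nra|].
  destruct (Nat.leb j k); [destruct (Nat.eqb j i)|]; nra.
Qed.

Lemma nu'_bounds (j : nat) : 0 <= nu' k n e i j <= 1.
Proof.
  destruct (le_lt_dec j k) as [Hj|Hj].
  - rewrite nu'_stage_one by exact Hj. pose proof (nu_stage_one_bounds j Hj). lra.
  - unfold nu'. replace (Nat.ltb k j) with true by (symmetry; apply Nat.ltb_lt; lia).
    lra.
Qed.

End HardInstances.

Theorem lemma4p5 (alpha : R) (m k n : nat) :
  1 <= alpha -> (2 <= m)%nat -> (m <= k)%nat -> (k < n)%nat ->
  exists T0 : nat, forall T : nat, (T0 <= T)%nat ->
    forall pol : policy, is_policy n m pol -> SR alpha m k n T pol ->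
    forall i : nat, (1 <= i <= k)%nat ->
      expect pol (nu k n (eps alpha k T) i) T nil (L1 k) <=
        / 8 * fkm alpha k m * Rpower (INR T) (1 / (alpha + 1)).
Proof.
  intros Halpha Hm Hmk Hkn.
  assert (Hn : 0 < INR n + 1) by (pose proof (pos_INR n); lra).
  destruct (eps_eventually_le alpha (/ 4 / (INR n + 1)) k) as [T0 HT0];
    [lra | apply Rdiv_lt_0_compat; lra | lia |].
  exists T0. intros T HT pol Hpol [_ HSR'] i Hi.
  pose proof (eps_pos alpha k T) as He.
  specialize (HT0 T HT).
  set (e := eps alpha k T) in *.
  assert (Hsmall : (INR n + 1) * e <= / 4).
  { replace (/ 4) with ((INR n + 1) * (/ 4 / (INR n + 1))) by (field; lra).
    apply Rmult_le_compat_l; lra. }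
  rewrite (expect_L1_ext n m pol Hpol k _ (nu' k n e i))
    by (auto using valid_hist_nil; intros j Hj; symmetry; apply nu'_stage_one; lia).
  assert (Hstar := one_le_mustar_nu' k n i e Hkn).
  assert (Hreg : / 4 * expect pol (nu' k n e i) T [] (L1 k)
                 <= exp_regret pol n (nu' k n e i) T).
  { apply (expect_L1_le_regret n m pol Hpol).
    - intros j. apply nu'_bounds; auto; lra.
    - intros j. pose proof (nu'_bounds k n i e ltac:(lra) Hsmall Hkn j). lra.
    - intros j Hj. rewrite nu'_stage_one by exact Hj.
      pose proof (nu_stage_one_bounds k n i e ltac:(lra) Hsmall Hkn j Hj). lra. }
  specialize (HSR' i Hi). lra.
Qed.
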